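(* Let $U(0)\geqslant 1$ and $d\geqslant 1$ be integers, $U(n)=U(0)+nd$, and let $S(n)=\overline{U(n)U(n-1)\cdots U(0)}$ (left-concatenation), so $S(0)=U(0)$. Let $n\geqslant 0$ and put $$l=\left\lceil \log_{10}(n d + S(0) + 1)\right\rceil,\qquad t_l=\left\lfloor \frac{10^{l-1}-S(0)}{d}\right\rfloor .$$ Assume $t_l\geqslant 0$ and $U(t_l+2)<10^l$. Let $p_l$ be the number of decimal digits of $S(t_l)$, let $s_0=S(t_l)$, $s_1=S(t_l+1)$, $s_2=S(t_l+2)$, and $$\alpha_l=\frac{s_2-2\cdot 10^l s_1+10^{2l}s_0}{(10^l-1)^2},\qquad \mu_l=\frac{\left((10^l-1)U(t_l)-d\right)10^{p_l}}{(10^l-1)^2},\qquad \theta_l=\frac{d\cdot 10^{p_l}}{10^l-1}.$$ Then $$S(n)=\alpha_l+\mu_l\,10^{l(n-t_l)}+\theta_l\,(n-t_l)\,10^{l(n-t_l)}.$$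
   Context: For positive integers $a_0,\ldots,a_k$, $\overline{a_0a_1\cdots a_k}$ denotes the integer whose decimal expansion is the decimal expansion of $a_0$ followed by that of $a_1$, ..., followed by that of $a_k$. Note $l$ is the number of decimal digits of $U(n)$. *)

From mathcomp Require Import all_boot all_order all_algebra.
Set Implicit Arguments. Unset Strict Implicit. Unset Printing Implicit Defensive.

Definition ndigits (m : nat) : nat := (trunc_log 10 m).+1.

Definition concat (a b : nat) : nat := a * 10 ^ ndigits b + b.

Definition U (U0 d n : nat) : nat := U0 + n * d.

Fixpoint Scat (U0 d n : nat) : nat :=
  match n with
  | 0 => U0
  | k.+1 => concat (U U0 d k.+1) (Scat U0 d k)
  end.

From mathcomp Require Import all_boot all_order all_algebra.
From mathcomp Require Import ring zify.
Import Order.TTheory GRing.Theory Num.Theory.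

Set Implicit Arguments.
Unset Strict Implicit.
Unset Printing Implicit Defensive.
Local Open Scope ring_scope.

(* Past index t every term U(t + j) has exactly l digits, so the digit count
   of S(t + k) is p + l k and, with L = 10^l,
     S(t + k + 1) = S(t + k) + 10^p L^k (U(t) + (k + 1) d).
   The solutions of such a recurrence are c + (a + b k) L^k with a, b
   determined by matching coefficients, and c is recovered from the second
   difference S(2) - 2 L S(1) + L^2 S(0) = c (L - 1)^2, which annihilates
   (a + b k) L^k. *)

Section ArithGeomRecurrence.

Variables (F : fieldType) (S : nat -> F) (P L u e : F) (K : nat).
Hypothesis L_neq1 : L != 1.
Hypothesis S_step : forall k, (k < K)%N ->
  S k.+1 = S k + P * L ^+ k * (u + k.+1%:R * e).

Let a := ((L - 1) * u - e) * P / (L - 1) ^+ 2.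
Let b := e * P / (L - 1).

Lemma arith_geom_sol k : (k <= K)%N ->
  S k = S 0 - a + a * L ^+ k + b * k%:R * L ^+ k.
Proof.
have L1_neq0 : L - 1 != 0 by rewrite subr_eq0.
elim: k => [|k IHk] ltkK; first by rewrite expr0 mulr0 mul0r addr0 mulr1 subrK.
rewrite S_step // IHk ?(ltnW ltkK) // exprS mulrS.
by rewrite /a /b; field.
Qed.

Lemma arith_geom_sol_const : (2 <= K)%N ->
  (S 2 - 2%:R * L * S 1 + L ^+ 2 * S 0) / (L - 1) ^+ 2 = S 0 - a.
Proof.
move=> leK2; have L1_neq0 : L - 1 != 0 by rewrite subr_eq0.
rewrite (@S_step 1 leK2) (@S_step 0 (ltnW leK2)).
by rewrite /a expr0 expr1; field.
Qed.

Lemma arith_geom_closed_form k : (2 <= K)%N -> (k <= K)%N ->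
  S k = (S 2 - 2%:R * L * S 1 + L ^+ 2 * S 0) / (L - 1) ^+ 2
        + a * L ^+ k + b * k%:R * L ^+ k.
Proof. by move=> leK2 lekK; rewrite arith_geom_sol_const // -arith_geom_sol. Qed.

End ArithGeomRecurrence.

Lemma ndigits_eq m l : (0 < l)%N -> (10 ^ l.-1 <= m < 10 ^ l)%N -> ndigits m = l.
Proof.
by case: l => // l _ /(trunc_log_eq (isT : (1 < 10)%N)); rewrite /ndigits => ->.
Qed.

Lemma ndigits_concat a b :
  (0 < a)%N -> ndigits (concat a b) = (ndigits a + ndigits b)%N.
Proof.
move=> a_gt0.
have lt_b : (b < 10 ^ ndigits b)%N := trunc_log_ltn b (isT : (1 < 10)%N).
have /andP[ge_a lt_a] := trunc_log_bounds (isT : (1 < 10)%N) a_gt0.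
apply: ndigits_eq; rewrite // /concat [ndigits a]/ndigits addSn /= expnS !expnD.
rewrite expnS in lt_a; nia.
Qed.

Section Concatenation.

Variables (U0 d : nat).
Hypothesis U0_gt0 : (0 < U0)%N.

Lemma ndigits_ScatS k :
  ndigits (Scat U0 d k.+1) = (ndigits (U U0 d k.+1) + ndigits (Scat U0 d k))%N.
Proof. by apply: ndigits_concat; rewrite addn_gt0 U0_gt0. Qed.

Lemma ndigits_Scat_addn t l k :
  (forall j, (0 < j <= k)%N -> ndigits (U U0 d (t + j)) = l) ->
  ndigits (Scat U0 d (t + k)) = (ndigits (Scat U0 d t) + l * k)%N.
Proof.
elim: k => [|k IHk] Ul; first by rewrite addn0 muln0 addn0.
have Ul_k j : (0 < j <= k)%N -> ndigits (U U0 d (t + j)) = l.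
  by case/andP=> j_gt0 le_jk; rewrite Ul // j_gt0 ltnW.
by rewrite addnS ndigits_ScatS -addnS Ul ?leqnn // IHk // mulnS; lia.
Qed.

Lemma Scat_addnS t k :
  Scat U0 d (t + k.+1) = (Scat U0 d (t + k)
    + 10 ^ ndigits (Scat U0 d (t + k)) * (U U0 d t + k.+1 * d))%N.
Proof.
by rewrite addnS /= /concat addnC mulnC /U -addnA -mulnDl addnS.
Qed.

End Concatenation.

Lemma divz_subn_nat (a c d t : nat) : (0 < d)%N ->
  t%:Z = ((a%:Z - c%:Z) %/ d%:Z)%Z -> (c <= a)%N /\ t = ((a - c) %/ d)%N.
Proof.
move=> d_gt0 t_def.
have le_ca : (c <= a)%N.
  by rewrite -lez_nat -subr_ge0 -(@divz_ge0 _ d%:Z) ?ltz_nat // -t_def.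
by split=> //; apply/eqP; rewrite -eqz_nat t_def subzn // divz_nat.
Qed.

Theorem theorem2 (U0 d n : nat) (hU0 : (1 <= U0)%N) (hd : (1 <= d)%N)
  (l : nat) (hl : l = up_log 10 (n * d + Scat U0 d 0 + 1))
  (t : nat)
  (ht : t%:Z = (((10 ^ l.-1)%N%:Z - (Scat U0 d 0)%:Z) %/ d%:Z)%Z)
  (hU : (U U0 d (t + 2) < 10 ^ l)%N) :
  let p := ndigits (Scat U0 d t) in
  let s0 : rat := (Scat U0 d t)%:R in
  let s1 : rat := (Scat U0 d t.+1)%:R in
  let s2 : rat := (Scat U0 d t.+2)%:R in
  let L : rat := 10%:R ^+ l in
  let alpha := (s2 - 2%:R * L * s1 + L ^+ 2 * s0) / (L - 1) ^+ 2 in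
  let mu := ((L - 1) * (U U0 d t)%:R - d%:R) * 10%:R ^+ p / (L - 1) ^+ 2 in
  let theta := d%:R * 10%:R ^+ p / (L - 1) in
  let m : int := n%:Z - t%:Z in
  (Scat U0 d n)%:R = alpha + mu * 10%:R ^ (l%:Z * m)
                    + theta * m%:~R * 10%:R ^ (l%:Z * m).
Proof.
move=> p s0 s1 s2 L alpha mu theta m; rewrite /= in hl ht.
have /andP[lt_l1 le_l] : (10 ^ l.-1 < n * d + U0 + 1 <= 10 ^ l)%N.
  by rewrite hl; apply: up_log_bounds => //; lia.
have l_gt0 : (0 < l)%N by rewrite hl up_log_gt0; lia.
have [le_U0 t_def] := divz_subn_nat hd ht.
have /andP[le_td lt_td] : (t * d <= 10 ^ l.-1 - U0 < t.+1 * d)%N.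
  by rewrite t_def leq_divM ltn_ceil.
have le_tn : (t <= n)%N by rewrite -(leq_pmul2r hd); lia.
(* alpha involves S(t + 2): the recurrence must reach t + 2 even if n < t + 2. *)
set K := maxn (n - t) 2.
have U_ndigits j : (0 < j <= K)%N -> ndigits (U U0 d (t + j)) = l.
  case/andP=> j_gt0; rewrite /K leq_max => le_jK.
  by apply: ndigits_eq; rewrite // /U in hU *; case/orP: le_jK; nia.
have L_neq1 : L != 1.
  by rewrite /L -natrX pnatr_eq1 -(expn0 10) eqn_exp2l // -lt0n.
have S_step k : (k < K)%N -> (Scat U0 d (t + k.+1))%:R = (Scat U0 d (t + k))%:R
    + 10%:R ^+ p * L ^+ k * ((U U0 d t)%:R + k.+1%:R * d%:R) :> rat.
  move=> lt_kK; rewrite Scat_addnS (@ndigits_Scat_addn _ _ hU0 t l k).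
    by rewrite !(natrD, natrM, natrX) exprD exprM.
  move=> j /andP[j_gt0 le_jk].
  by rewrite U_ndigits // j_gt0 (leq_trans le_jk (ltnW lt_kK)).
have := arith_geom_closed_form L_neq1 S_step (leq_maxr _ _) (leq_maxl (n - t) 2).
rewrite subnKC // addn0 addn1 addn2 => ->.
by rewrite /m subzn // -PoszM -exprnP exprM.
Qed.
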